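(* There is a polynomial $P$ such that for every MEMDP $\Gamma=(Q,A,E,(\delta_e)_{e\in E})$ with rational transition probabilities there is a function $\varepsilon\mapsto m(\Gamma,\varepsilon)\in\mathbb N$ satisfying, for all $0<\varepsilon<1$, $m(\Gamma,\varepsilon)\le P(k,2^l,x)$ where $k=|E|$, $l$ is the maximum number of bits needed to write any transition probability of $\Gamma$ (numerator and denominator in binary), and $x=\lceil\log_2(1/\varepsilon)\rceil$; and such that for every prior $b\in\mathcal D(E)$, every state $q\in Q$, every strategy $\sigma\in\mathrm{Strat}(Q,A)$ and every environment $e\in E$: $$\mathbb P^\sigma_q\big[\Gamma[e],\ \{\rho:\mathrm{nb}_{\mathrm{dstg}}(\rho)\ge m(\Gamma,\varepsilon)\}\cap \mathrm{NeverSmallBelief}(b,\varepsilon)\big]\le\varepsilon .$$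
   Context: For a set $X$, $\mathcal D(X)$ is the set of distributions on $X$ (countable support, summing to 1). An MDP is $G=(Q,A,\delta)$ with $Q,A$ finite non-empty and $\delta:Q\times A\to\mathcal D(Q)$; finite runs are in $Q\cdot(A\cdot Q)^*$, infinite runs in $(Q\cdot A)^\omega$; a strategy is $\sigma:Q\cdot(A\cdot Q)^*\to\mathcal D(A)$, and $\mathbb P^\sigma_q[G,\cdot]$ is the induced probability measure on infinite runs from $q$ (the cylinder of $q_0(a_1,q_1)\cdots(a_n,q_n)$ has probability $[q_0=q]\prod_i\sigma(\text{prefix up to }q_{i-1})(a_i)\delta(q_{i-1},a_i)(q_i)$). An MEMDP is $\Gamma=(Q,A,E,(\delta_e)_{e\in E})$ with $E$ finite non-empty and each $\Gamma[e]=(Q,A,\delta_e)$ an MDP. A pair $(q,a)$ is $(e,e')$-distinguishing ($e\ne e'$) if $\delta_e(q,a)\ne\delta_{e'}(q,a)$; $\mathrm{Dstg}(\Gamma)$ is the set of pairs that are $(e,e')$-distinguishing for some $e\ne e'$. Belief update: for $b\in\mathcal D(E)$, $p[b,q,a](q'):=\sum_e b(e)\delta_e(q,a)(q')$, and if $p[b,q,a](q')>0$, $\lambda[b,q,a,q'](e):=b(e)\delta_e(q,a)(q')/p[b,q,a](q')$ (arbitrary distribution otherwise). The likelihood map is $\mathrm{lk}_b(q):=b$ and $\mathrm{lk}_b(\rho\cdot(a,q')):=\lambda[\mathrm{lk}_b(\rho),\mathrm{last}(\rho),a,q']$. For an infinite run $\rho$, $\mathrm{nb}_{\mathrm{dstg}}(\rho)\in\mathbb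 N\cup\{\infty\}$ is the number of positions $i$ with $(q_i,a_i)\in\mathrm{Dstg}(\Gamma)$, writing $\rho=(q_0,a_0)(q_1,a_1)\cdots$. $\mathrm{NeverSmallBelief}(b,\varepsilon)$ is the set of infinite runs all of whose finite prefixes $\pi\in Q\cdot(A\cdot Q)^*$ satisfy $\mathrm{lk}_b(\pi)(e')>\varepsilon$ for all $e'\in E$. *)

From HB Require Import structures.
From mathcomp Require Import all_boot all_order all_algebra.
From mathcomp Require Import all_classical all_reals.
From mathcomp Require Import measure.
From mathcomp Require Import Rstruct.
From Stdlib Require Rdefinitions.

Set Implicit Arguments.
Unset Strict Implicit.
Unset Printing Implicit Defensive.

Import Order.TTheory GRing.Theory Num.Theory.
Local Open Scope ring_scope.
Local Open Scope classical_set_scope.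

Definition R := Rdefinitions.R.

(* A polynomial is a finite list of monomials (c, (i, j, h)) meaning c * X^i * Y^j * Z^h. *)
Definition poly3 := seq (nat * (nat * nat * nat)).
Definition eval_poly3 (P : poly3) (X Y Z : nat) : nat :=
  \sum_(mo <- P) mo.1 * X ^ mo.2.1.1 * Y ^ mo.2.1.2 * Z ^ mo.2.2.

(* number of bits of the binary representation of a natural number (0 is written "0") *)
Definition bitlen (n : nat) : nat := if n == 0%N then 1%N else (trunc_log 2 n).+1.
Definition rat_bits (r : rat) : nat := (bitlen (absz (numq r)) + bitlen (absz (denq r)))%N.

Definition ceil_log2_inv (eps : R) : nat :=
  if pselect (exists n : nat, eps^-1 <= 2 ^+ n) is left h then ex_minn h else 0%N.

Section MEMDP.
Variables (Q A E : finType).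
(* delta e q a q' : probability to go to q' when playing a in q, in environment e *)
Variable delta : E -> Q -> A -> Q -> rat.

Definition is_distr (T : finType) (d : T -> R) : Prop :=
  (forall t, 0 <= d t) /\ \sum_(t : T) d t = 1.

Definition is_memdp : Prop :=
  (0 < #|Q|)%N /\ (0 < #|A|)%N /\ (0 < #|E|)%N /\
  forall e q a, (forall q', 0 <= delta e q a q') /\ \sum_(q' : Q) delta e q a q' = 1.

Definition max_bits : nat :=
  \max_(e : E) \max_(q : Q) \max_(a : A) \max_(q' : Q) rat_bits (delta e q a q').

Definition dstg (qa : Q * A) : bool :=
  [exists e : E, exists e' : E,
     (e != e') && [exists q' : Q, delta e qa.1 qa.2 q' != delta e' qa.1 qa.2 q']].

(* finite runs q0 (a1,q1) ... (an,qn) *)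
Definition frun := (Q * seq (A * Q))%type.
(* infinite runs (q0,a0)(q1,a1)... *)
Definition irun := nat -> Q * A.

Definition prefix (rho : irun) (n : nat) : frun :=
  ((rho 0%N).1, [seq ((rho i).2, (rho i.+1).1) | i <- iota 0 n]).

(* nb_dstg(rho) >= m  (nb_dstg in N u {oo}) *)
Definition dstg_count (rho : irun) (n : nat) : nat :=
  count (fun i => dstg (rho i)) (iota 0 n).
Definition nb_dstg_ge (rho : irun) (m : nat) : Prop :=
  exists n, (m <= dstg_count rho n)%N.

(* belief update; [dflt] is the arbitrary distribution used when p[b,q,a](q') = 0 *)
Variable dflt : (E -> R) -> Q -> A -> Q -> (E -> R).
Definition pb (b : E -> R) (q : Q) (a : A) (q' : Q) : R :=
  \sum_(e : E) b e * ratr (delta e q a q').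
Definition lam (b : E -> R) (q : Q) (a : A) (q' : Q) : E -> R :=
  if 0 < pb b q a q' then fun e => b e * ratr (delta e q a q') / pb b q a q'
  else dflt b q a q'.
Definition lk (b : E -> R) (pi : frun) : E -> R :=
  (foldl (fun bq aq => (lam bq.1 bq.2 aq.1 aq.2, aq.2)) (b, pi.1) pi.2).1.

Definition NeverSmallBelief (b : E -> R) (eps : R) : set irun :=
  [set rho | forall n (e' : E), eps < lk b (prefix rho n) e'].

Definition strategy := frun -> A -> R.
Definition is_strategy (sigma : strategy) : Prop := forall pi, is_distr (sigma pi).

Definition cyl_prob (e : E) (sigma : strategy) (q : Q) (pi : frun) : R :=
  (pi.1 == q)%:R *
  \prod_(i < size pi.2)
     (let st := last pi.1 (map snd (take i pi.2)) in
      let aq := tnth (in_tuple pi.2) i in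
      sigma (pi.1, take i pi.2) aq.1 * ratr (delta e st aq.1 aq.2)).
End MEMDP.

(* the (pointed) type of infinite runs; the point is irrelevant, needed by the library *)
Definition RunT (Q A : finType) (x0 : Q * A) := irun Q A.
Arguments RunT {Q A} x0.
HB.instance Definition _ (Q A : finType) (x0 : Q * A) :=
  Choice.on (RunT x0).
HB.instance Definition _ (Q A : finType) (x0 : Q * A) :=
  isPointed.Build (RunT x0) (fun _ => x0).

Definition cylinder (Q A : finType) (x0 : Q * A) (pi : frun Q A) : set (RunT x0) :=
  [set rho | prefix rho (size pi.2) = pi].
Arguments cylinder {Q A} x0 pi.
Definition cylinders (Q A : finType) (x0 : Q * A) : set (set (RunT x0)) :=
  [set C | exists pi, C = cylinder x0 pi].
Arguments cylinders {Q A} x0.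
Definition RunSpace (Q A : finType) (x0 : Q * A) := g_sigma_algebraType (cylinders x0).
Arguments RunSpace {Q A} x0.

(* mu is the probability measure P^sigma_q[Gamma[e], .] on infinite runs,
   characterized by its values on cylinders *)
Definition is_run_measure (Q A E : finType) (delta : E -> Q -> A -> Q -> rat)
  (x0 : Q * A) (e : E) (sigma : strategy Q A) (q : Q)
  (mu : {measure set (RunSpace x0) -> \bar R}) : Prop :=
  mu setT = 1%E /\
  forall pi : frun Q A, mu (cylinder x0 pi) = (cyl_prob delta e sigma q pi)%:E.
Arguments is_run_measure {Q A E} delta x0 e sigma q mu.

(* Fix the true environment e and let L_h be the belief after a history h.
   For every environment e', sqrt (L_h e' / L_h e) * w ^ D_h(e'), where D_h(e')
   counts the (e,e')-distinguishing steps of h and w = 1 + c with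
   c = 1 / (8 N^4), is a supermartingale under P_e: one step multiplies
   sqrt (L e' / L e) in expectation by the Bhattacharyya coefficient
   sum_q' sqrt (delta_e delta_e'), and this coefficient is at most 1 - c at a
   distinguishing pair, because two distinct rationals with denominators at
   most N = 2^l are 1/N^2 apart. Summing over e' gives a nonnegative
   supermartingale G with initial value at most |E|/eps when b(e) > eps (when
   b(e) <= eps the event is empty). On a history with |E| d distinguishing
   steps whose beliefs stay above eps, some e' has D(e') >= d, so G >= eps w^d;
   by Markov's inequality such histories have probability at most
   |E| / (eps^2 w^d), which is below eps once d = 8 N^4 (3 x + |E|), since
   w^(8 N^4) >= 2. Continuity of the measure from below passes from histories
   of a fixed length to infinite runs. *)
From Pilot Require Import Defs.
From HB Require Import structures.
From mathcomp Require Import all_boot all_order all_algebra.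
From mathcomp Require Import all_classical all_reals.
From mathcomp Require Import measure.
From mathcomp Require Import Rstruct.
From mathcomp Require Import all_analysis.
From mathcomp Require Import ring lra zify.
Import Order.TTheory GRing.Theory Num.Theory.
Local Open Scope ring_scope.
Local Open Scope classical_set_scope.
Set Implicit Arguments.
Unset Strict Implicit.
Unset Printing Implicit Defensive.

Lemma pigeonhole_sum (I : finType) (f : I -> nat) d :
  (#|I| * d.-1 < \sum_(i : I) f i)%N -> exists i, (d <= f i)%N.
Proof.
move=> hsum; apply/existsP; apply: contraLR hsum; rewrite negb_exists -leqNgt.
move=> /forallP hlt; rewrite -sum_nat_const; apply: leq_sum => i _.
by have := hlt i; rewrite -ltnNge; lia.
Qed.

Lemma bernoulli_ineq (K : realFieldType) (c : K) n :
  0 <= c -> 1 + n%:R * c <= (1 + c) ^+ n.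
Proof.
move=> hc; elim: n => [|n IH]; first by rewrite mul0r addr0 expr0.
rewrite exprS; apply: le_trans (_ : (1 + c) * (1 + n%:R * c) <= _); last first.
  by apply: ler_wpM2l => //; rewrite addr_ge0.
have h0 : 0 <= n%:R * c * c by rewrite !mulr_ge0.
rewrite -natr1; nra.
Qed.

(* Makes a gap between two transition probabilities visible in their
   Bhattacharyya coefficient. *)
Lemma sqrtrM_le_mean (K : rcfType) (x y : K) : 0 <= x <= 1 -> 0 <= y <= 1 ->
  Num.sqrt (x * y) <= (x + y) / 2 - (x - y) ^+ 2 / 8.
Proof.
move=> /andP [hx0 hx1] /andP [hy0 hy1].
rewrite sqrtrM //.
have hu := sqr_sqrtr hx0; have hv := sqr_sqrtr hy0.
have hu0 := sqrtr_ge0 x; have hv0 := sqrtr_ge0 y.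
move: (Num.sqrt x) (Num.sqrt y) hu hv hu0 hv0 => u v hu hv hu0 hv0.
rewrite -hu -hv in hx1 hy1 *.
have h4 : (u + v) ^+ 2 <= 4 by nra.
have h6 : (u ^+ 2 - v ^+ 2) ^+ 2 <= 4 * (u - v) ^+ 2.
  have -> : (u ^+ 2 - v ^+ 2) ^+ 2 = (u - v) ^+ 2 * (u + v) ^+ 2 by ring.
  by rewrite [4 * _]mulrC; apply: ler_wpM2l; rewrite ?sqr_ge0.
have -> : u * v = (u ^+ 2 + v ^+ 2) / 2 - (u - v) ^+ 2 / 2 by field.
have := sqr_ge0 (u - v); lra.
Qed.

Lemma sqrtr_ge_le1 (K : rcfType) (a b : K) : 0 <= a <= 1 -> a <= b -> a <= Num.sqrt b.
Proof.
move=> /andP [ha0 ha1] hab.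
rewrite -(ger0_norm ha0) -sqrtr_sqr ler_sqrt; last exact: le_trans hab.
by apply: le_trans hab; rewrite expr2 ler_piMr.
Qed.

Lemma sqrtr_le_ge1 (K : rcfType) (a b : K) : 1 <= a -> 0 <= b <= a -> Num.sqrt b <= a.
Proof.
move=> ha1 /andP [hb0 hba].
have ha0 : 0 <= a by apply: le_trans ha1.
rewrite -(ger0_norm ha0) -sqrtr_sqr ler_sqrt ?sqr_ge0 //.
by apply: le_trans hba _; rewrite expr2 ler_peMr.
Qed.

Lemma rat_dist_ge (p q : rat) (N : nat) : p != q ->
  denq p <= N%:Z -> denq q <= N%:Z -> (N%:R ^+ 2)^-1 <= `|p - q|.
Proof.
move=> hpq hp hq.
have dp0 := denq_gt0 p; have dq0 := denq_gt0 q.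
set z := numq p * denq q - numq q * denq p.
have hz : (p - q) * ((denq p)%:~R * (denq q)%:~R) = z%:~R :> rat.
  by rewrite /z rmorphB !rmorphM /= !numqE; ring.
have hz0 : z != 0.
  apply: contra hpq => /eqP z0; move: hz; rewrite z0 mulr0z => /eqP.
  by rewrite mulf_eq0 mulf_eq0 !intr_eq0 (gt_eqF dp0) (gt_eqF dq0) !orbF subr_eq0.
have h1 : 1 <= `|z%:~R : rat| by rewrite -intr_norm ler1z; move: hz0; lia.
rewrite -hz normrM in h1.
have hN : (denq p)%:~R * (denq q)%:~R <= N%:R ^+ 2 :> rat.
  rewrite expr2; apply: ler_pM; try by rewrite ler0z ltW.
  - by move: hp; rewrite -(ler_int rat).
  - by move: hq; rewrite -(ler_int rat).
have hd0 : 0 < (denq p)%:~R * (denq q)%:~R :> rat by rewrite mulr_gt0 ?ltr0z.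
rewrite (ger0_norm (ltW hd0)) in h1.
have hN0 : 0 < N%:R ^+ 2 :> rat by apply: lt_le_trans hN.
rewrite -(@ler_pM2r _ (N%:R ^+ 2)) // mulVf ?gt_eqF //.
by apply: le_trans h1 _; rewrite ler_pM2l ?normr_gt0 ?subr_eq0.
Qed.

Lemma is_distr_le1 (T : finType) (d : T -> R) t : is_distr d -> d t <= 1.
Proof.
by case=> hd0 <-; rewrite (bigD1 t) //= lerDl; apply: sumr_ge0.
Qed.

(** * Histories and prefixes of runs *)

Section Histories.
Variables Q A : finType.

Definition last_state (p : Q) (s : seq (A * Q)) : Q := last p (map snd s).

Fixpoint count_steps (P : pred (Q * A)) (p : Q) (s : seq (A * Q)) : nat :=
  if s is x :: s' then (P (p, x.1) + count_steps P x.2 s')%N else 0%N.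

Lemma count_steps_rcons P p s x :
  count_steps P p (rcons s x) = (count_steps P p s + P (last_state p s, x.1))%N.
Proof. by elim: s p => [|y s IH] p /=; rewrite ?addn0 // IH addnA. Qed.

Lemma count_steps_le_sum (I : finType) (P : pred (Q * A)) (P_ : I -> pred (Q * A)) p s :
  (forall x, P x -> exists i, P_ i x) ->
  (count_steps P p s <= \sum_(i : I) count_steps (P_ i) p s)%N.
Proof.
move=> hP; elim: s p => [|[a q'] s IH] p /=; first by rewrite big1.
rewrite big_split /=; apply: leq_add (IH q').
case hPx: (P (p, a)) => //.
by have [i hi] := hP _ hPx; rewrite (bigD1 i) //= hi.
Qed.

Fixpoint histories (n : nat) : seq (seq (A * Q)) :=
  if n is n'.+1 then [seq rcons s x | s <- histories n', x <- index_enum (prod A Q)]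
  else [:: [::]].

Lemma prefixS (rho : irun Q A) n :
  Defs.prefix rho n.+1 =
  ((rho 0%N).1, rcons (Defs.prefix rho n).2 ((rho n).2, (rho n.+1).1)).
Proof. by rewrite /Defs.prefix -[n.+1]addn1 iotaD map_cat /= cats1 add0n addn1. Qed.

Lemma size_prefix (rho : irun Q A) n : size (Defs.prefix rho n).2 = n.
Proof. by rewrite /Defs.prefix /= size_map size_iota. Qed.

Lemma last_state_prefix (rho : irun Q A) n :
  last_state (rho 0%N).1 (Defs.prefix rho n).2 = (rho n).1.
Proof. by case: n => [//|n]; rewrite prefixS /last_state map_rcons last_rcons. Qed.

Lemma count_iota_prefix (P : pred (Q * A)) (rho : irun Q A) n :
  count (fun i => P (rho i)) (iota 0 n) = count_steps P (rho 0%N).1 (Defs.prefix rho n).2.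
Proof.
elim: n => [//|n IH].
rewrite prefixS count_steps_rcons -IH last_state_prefix -[n.+1]addn1 iotaD.
by rewrite count_cat /= addn0 -surjective_pairing.
Qed.

Lemma prefix_histories (rho : irun Q A) n : (Defs.prefix rho n).2 \in histories n.
Proof.
elim: n => [|n IH]; first by rewrite inE.
by rewrite prefixS; apply: allpairs_f => //; rewrite mem_index_enum.
Qed.

End Histories.

Section MEMDPHistories.
Variables (Q A E : finType) (delta : E -> Q -> A -> Q -> rat).

Lemma lk_rcons dflt b p s a q' :
  lk delta dflt b (p, rcons s (a, q')) =
  lam delta dflt (lk delta dflt b (p, s)) (last_state p s) a q'.
Proof.
have foldl_snd (T : Type) (f : T -> Q -> A -> Q -> T) (b' : T) p' s' :
    (foldl (fun bq aq => (f bq.1 bq.2 aq.1 aq.2, aq.2)) (b', p') s').2 = last_state p' s'.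
  by elim: s' b' p' => [|[a' q''] s' IH] b' p' //=; rewrite IH.
by rewrite /lk /= foldl_rcons /= -(foldl_snd _ (lam delta dflt) b p s).
Qed.

Lemma cyl_prob_rcons e sigma q p s a q' :
  cyl_prob delta e sigma q (p, rcons s (a, q')) =
  cyl_prob delta e sigma q (p, s) * sigma (p, s) a * ratr (delta e (last_state p s) a q').
Proof.
pose step (t : seq (A * Q)) i := let x := nth (a, q') t i in
  sigma (p, take i t) x.1 * ratr (delta e (last p (map snd (take i t))) x.1 x.2).
have cylE t : cyl_prob delta e sigma q (p, t) =
    (p == q)%:R * \prod_(0 <= i < size t) step t i.
  rewrite /cyl_prob /= big_mkord; congr (_ * _); apply: eq_bigr => i _.
  by rewrite /step (tnth_nth (a, q')).
rewrite !cylE size_rcons big_nat_recr //= -!mulrA; congr (_ * (_ * _)).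
  apply: eq_big_nat => i /andP [_ hi].
  by rewrite /step nth_rcons hi -cats1 takel_cat // ltnW.
by rewrite /step nth_rcons ltnn eqxx -cats1 take_size_cat.
Qed.

Lemma dstg_count_le (rho : irun Q A) n n' : (n <= n')%N ->
  (dstg_count delta rho n <= dstg_count delta rho n')%N.
Proof. by move=> hn; rewrite /dstg_count -(subnKC hn) iotaD count_cat leq_addr. Qed.

End MEMDPHistories.

(** * Measures on runs *)

Lemma nondecreasing_bigcup_measure_le d (T : measurableType d) (K : realType)
    (mu : {measure set T -> \bar K}) (F : nat -> set T) (c : \bar K) :
  (forall n, measurable (F n)) -> nondecreasing_seq F ->
  (forall n, (mu (F n) <= c)%E) -> (mu (\bigcup_n F n) <= c)%E.
Proof.
move=> mF ndF hc.
have hcvg := @nondecreasing_cvg_mu _ _ _ mu F mF (bigcupT_measurable _ mF) ndF.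
rewrite -(cvg_lim _ hcvg) //; apply: lime_le; first by apply/cvg_ex; eexists; exact: hcvg.
exact: nearW.
Qed.

Section RunMeasure.
Variables (Q A : finType) (x0 : Q * A).

Lemma measurable_prefix_set (P : pred (frun Q A)) n :
  measurable [set rho : RunSpace x0 | P (Defs.prefix rho n)].
Proof.
(* a countable union of cylinders, enumerated through [pickle] *)
have -> : [set rho : RunSpace x0 | P (Defs.prefix rho n)] =
  \bigcup_k (if unpickle k is Some pi then
               if P pi && (size pi.2 == n) then cylinder x0 pi else set0
             else set0).
  apply/seteqP; split => rho /=.
    move=> hP; exists (pickle (Defs.prefix rho n)) => //.
    by rewrite pickleK hP size_prefix eqxx /cylinder /= size_prefix.
  case=> k _; case: (unpickle k) => [pi|] //; case: ifP => // /andP [hp /eqP hs].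
  by rewrite /cylinder /= hs => ->.
apply: bigcupT_measurable => k; case: (unpickle k) => [pi|]; last exact: measurable0.
case: ifP => _; last exact: measurable0.
by apply: sub_sigma_algebra; exists pi.
Qed.

Lemma measure_prefix_set_le (E : finType) (delta : E -> Q -> A -> Q -> rat) e
    (sigma : strategy Q A) q (mu : {measure set (RunSpace x0) -> \bar R}) :
  (forall pi, mu (cylinder x0 pi) = (cyl_prob delta e sigma q pi)%:E) ->
  forall (P : pred (frun Q A)) n,
  (mu [set rho : RunSpace x0 | P (Defs.prefix rho n)] <=
   (\sum_(s <- histories Q A n) (P (q, s))%:R * cyl_prob delta e sigma q (q, s))%:E)%E.
Proof.
move=> mu_cyl P n.
set L := [seq (q0, s) | q0 <- index_enum Q, s <- histories Q A n].
pose pi0 : frun Q A := (q, [::]).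
pose C i : set (RunSpace x0) := if P (nth pi0 L i) then cylinder x0 (nth pi0 L i) else set0.
have mC i : measurable (C i).
  rewrite /C; case: ifP => _; last exact: measurable0.
  by apply: sub_sigma_algebra; eexists.
have cover : [set rho : RunSpace x0 | P (Defs.prefix rho n)] `<=`
             \big[setU/set0]_(i < size L) C i.
  move=> rho hP; rewrite -bigcup_mkord.
  have hin : Defs.prefix rho n \in L.
    rewrite (surjective_pairing (Defs.prefix rho n)).
    by apply: allpairs_f; [exact: mem_index_enum | exact: prefix_histories].
  exists (index (Defs.prefix rho n) L); first by rewrite /= index_mem.
  by rewrite /C nth_index // hP /cylinder /= size_prefix.
apply: le_trans (le_measure _ _ _ cover) _.
- by rewrite inE; exact: measurable_prefix_set.
- by rewrite inE; apply: bigsetU_measurable => i _; exact: mC.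
apply: le_trans (Boole_inequality _ _) _; first by move=> i _; exact: mC.
have -> : (\sum_(i < size L) mu (C i) =
   \sum_(i < size L) ((P (nth pi0 L i))%:R * cyl_prob delta e sigma q (nth pi0 L i))%:E)%E.
  apply: eq_bigr => i _; rewrite /C; case: ifP => _; first by rewrite mu_cyl mul1r.
  by rewrite measure0 mul0r.
rewrite sumEFin lee_fin.
rewrite -(big_mkord xpredT (fun i => (P (nth pi0 L i))%:R * cyl_prob delta e sigma q (nth pi0 L i))).
rewrite -(big_nth pi0 xpredT (fun pi => (P pi)%:R * cyl_prob delta e sigma q pi)).
rewrite big_allpairs /= (bigD1 q) //= [X in _ + X]big1 ?addr0 // => q0 hq0.
by apply: big1 => s _; rewrite /cyl_prob /= (negbTE hq0) mul0r mulr0.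
Qed.

Lemma measurable_NeverSmallBelief (E : finType) (delta : E -> Q -> A -> Q -> rat) dflt b eps :
  measurable (NeverSmallBelief delta dflt b eps : set (RunSpace x0)).
Proof.
pose high_beliefs (pi : frun Q A) := [forall e', eps < lk delta dflt b pi e'].
have -> : (NeverSmallBelief delta dflt b eps : set (RunSpace x0)) =
          \bigcap_n [set rho | high_beliefs (Defs.prefix rho n)].
  apply/seteqP; split => rho /= h; first by move=> n _; apply/forallP; exact: h.
  by move=> n e'; exact: (forallP (h n I)).
by apply: bigcapT_measurable => n; exact: measurable_prefix_set.
Qed.

End RunMeasure.

(** * Beliefs and the Bhattacharyya coefficient *)

Section Beliefs.
Variables (Q A E : finType) (delta : E -> Q -> A -> Q -> rat).
Hypothesis delta_ge0 : forall e q a q', 0 <= delta e q a q'.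
Hypothesis sum_delta : forall e q a, \sum_(q' : Q) delta e q a q' = 1.
Variable dflt : (E -> R) -> Q -> A -> Q -> (E -> R).
Hypothesis dflt_distr : forall b q a q', is_distr (dflt b q a q').

Local Notation d e p a q' := (ratr (delta e p a q') : R).

Lemma ratr_delta_ge0 e p a q' : 0 <= d e p a q'.
Proof. by rewrite ler0q. Qed.

Lemma sum_ratr_delta e p a : \sum_(q' : Q) d e p a q' = 1.
Proof. by rewrite -rmorph_sum sum_delta rmorph1. Qed.

Lemma ratr_delta_le1 e p a q' : d e p a q' <= 1.
Proof.
apply: (@is_distr_le1 _ (fun q'' => d e p a q'')).
by split; [exact: ratr_delta_ge0 | exact: sum_ratr_delta].
Qed.

Lemma pb_gt0 (L : E -> R) p a q' e : is_distr L -> 0 < L e -> 0 < d e p a q' ->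
  0 < pb delta L p a q'.
Proof.
move=> [hL0 _] hLe hd; rewrite /pb (bigD1 e) //=; apply: ltr_wpDr.
  by apply: sumr_ge0 => i _; rewrite mulr_ge0 ?ratr_delta_ge0.
by rewrite mulr_gt0.
Qed.

Lemma lam_distr (L : E -> R) p a q' : is_distr L -> is_distr (lam delta dflt L p a q').
Proof.
move=> [hL0 hL1]; rewrite /lam; case: ifP => hp; last exact: dflt_distr.
split; last by rewrite -mulr_suml divff // gt_eqF.
by move=> t; rewrite divr_ge0 ?(ltW hp) // mulr_ge0 ?hL0 ?ratr_delta_ge0.
Qed.

Lemma lk_distr (b : E -> R) p s : is_distr b -> is_distr (lk delta dflt b (p, s)).
Proof.
move=> hb; elim/last_ind: s => [//|s [a q'] IH].
by rewrite lk_rcons; exact: lam_distr.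
Qed.

Lemma cyl_prob_ge0 e sigma q p s : is_strategy sigma ->
  0 <= cyl_prob delta e sigma q (p, s).
Proof.
move=> hsigma; elim/last_ind: s => [|s [a q'] IH].
  by rewrite /cyl_prob /= big_ord0 mulr1 ler0n.
rewrite cyl_prob_rcons mulr_ge0 ?ratr_delta_ge0 // mulr_ge0 //.
by case: (hsigma (p, s)).
Qed.

Lemma lk_gt0 e sigma q p s (b : E -> R) : is_distr b -> 0 < b e ->
  cyl_prob delta e sigma q (p, s) != 0 -> 0 < lk delta dflt b (p, s) e.
Proof.
move=> hb hbe; elim/last_ind: s => [//|s [a q'] IH].
rewrite cyl_prob_rcons => hne.
have hLe : 0 < lk delta dflt b (p, s) e.
  by apply: IH; apply: contraNneq hne => ->; rewrite !mul0r.
have hd : 0 < d e (last_state p s) a q'.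
  by rewrite lt_def ratr_delta_ge0 andbT; apply: contraNneq hne => ->; rewrite mulr0.
have hL := lk_distr p s hb.
rewrite lk_rcons /lam (pb_gt0 hL hLe hd).
by rewrite divr_gt0 ?(pb_gt0 hL hLe hd) // mulr_gt0.
Qed.

Lemma sqrt_lam_ratio (L : E -> R) p a q' e e' : is_distr L -> 0 < L e ->
  d e p a q' * Num.sqrt (lam delta dflt L p a q' e' / lam delta dflt L p a q' e) =
  Num.sqrt (L e' / L e) * Num.sqrt (d e p a q' * d e' p a q').
Proof.
move=> hL hLe; have [hL0 _] := hL.
have [->|hpos] := eqVneq (d e p a q') 0; first by rewrite !mul0r sqrtr0 mulr0.
have hdp : 0 < d e p a q' by rewrite lt_def hpos ratr_delta_ge0.
have hpb := pb_gt0 hL hLe hdp.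
rewrite /lam hpb.
have -> : L e' * d e' p a q' / pb delta L p a q' / (L e * d e p a q' / pb delta L p a q') =
          (L e' / L e) * (d e' p a q' / d e p a q').
  by field; rewrite !gt_eqF.
rewrite sqrtrM ?divr_ge0 ?hL0 ?ltW // mulrC -mulrA; congr (_ * _).
rewrite -[X in _ * X = _](ger0_norm (ltW hdp)) -sqrtr_sqr -sqrtrM; last first.
  by rewrite divr_ge0 ?ratr_delta_ge0 ?ltW.
by congr Num.sqrt; field; rewrite gt_eqF.
Qed.

Definition distinguishes (e e' : E) (qa : Q * A) : bool :=
  [exists q', delta e qa.1 qa.2 q' != delta e' qa.1 qa.2 q'].

Lemma dstg_distinguishes e qa : dstg delta qa -> exists e', distinguishes e e' qa.
Proof.
move=> /existsP [e1 /existsP [e2 /andP [_ /existsP [q' hq']]]].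
have [h1|h1] := eqVneq (delta e qa.1 qa.2 q') (delta e1 qa.1 qa.2 q').
  by exists e2; apply/existsP; exists q'; rewrite h1.
by exists e1; apply/existsP; exists q'.
Qed.

Variable N : nat.
Hypothesis den_le : forall e p a q', denq (delta e p a q') <= N%:Z.

(* the separation 1/N^2 between distinct transition probabilities, squared over 8 *)
Definition sep_const : R := (N%:R ^+ 2)^-1 ^+ 2 / 8.

Lemma sep_const_ge0 : 0 <= sep_const.
Proof. by rewrite /sep_const divr_ge0 ?exprn_ge0 ?invr_ge0 ?exprn_ge0. Qed.

Lemma bhattacharyya_le e e' p a :
  \sum_(q' : Q) Num.sqrt (d e p a q' * d e' p a q') <=
  1 - (if distinguishes e e' (p, a) then sep_const else 0).
Proof.
apply: le_trans (_ : \sum_(q' : Q) ((d e p a q' + d e' p a q') / 2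
                                    - (d e p a q' - d e' p a q') ^+ 2 / 8) <= _).
  by apply: ler_sum => q' _; apply: sqrtrM_le_mean; rewrite ratr_delta_ge0 ratr_delta_le1.
rewrite sumrB -mulr_suml big_split /= !sum_ratr_delta.
have -> : (1 + 1) / 2 = 1 :> R by field.
have sqr_div8_ge0 (x : R) : 0 <= x ^+ 2 / 8 by rewrite divr_ge0 ?sqr_ge0.
rewrite lerD2l lerN2.
case: ifP => [/existsP [q0 hq0] /=|_]; last by apply: sumr_ge0.
rewrite (bigD1 q0) //=; apply: le_trans (ler_wpDr (sumr_ge0 _ _) (lexx _)) => //.
rewrite /sep_const ler_pM2r ?invr_gt0 //.
have gap := rat_dist_ge hq0 (den_le e p a q0) (den_le e' p a q0).
rewrite -(ler_rat R) ratr_norm rmorphB fmorphV rmorphXn /= ratr_nat in gap.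
rewrite -[X in _ <= X](real_normK (num_real _)) !expr2.
by apply: ler_pM; rewrite ?invr_ge0 ?exprn_ge0.
Qed.

(** * The supermartingale *)

Section Potential.
Variables (e : E) (q : Q) (sigma : strategy Q A) (b : E -> R).
Hypothesis sigma_strategy : is_strategy sigma.
Hypothesis b_distr : is_distr b.
Hypothesis b_gt0 : 0 < b e.

Local Notation lkq s := (lk delta dflt b (q, s)).
Local Notation cyl s := (cyl_prob delta e sigma q (q, s)).
Local Notation w := (1 + sep_const).

Definition potential (s : seq (A * Q)) : R :=
  \sum_(e' : E) Num.sqrt (lkq s e' / lkq s e) *
                w ^+ count_steps (distinguishes e e') q s.

Lemma w_ge0 : 0 <= w.
Proof. by rewrite addr_ge0 ?sep_const_ge0. Qed.

Lemma potential_ge0 s : 0 <= potential s.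
Proof. by apply: sumr_ge0 => i _; rewrite mulr_ge0 ?sqrtr_ge0 ?exprn_ge0 ?w_ge0. Qed.

Lemma potential_step_le s a : 0 < lkq s e ->
  \sum_(q' : Q) d e (last_state q s) a q' * potential (rcons s (a, q')) <= potential s.
Proof.
move=> hLe; set p := last_state q s.
have hL := lk_distr q s b_distr.
rewrite /potential.
under eq_bigr => q' _ do rewrite mulr_sumr.
rewrite exchange_big /=; apply: ler_sum => e' _.
under eq_bigr => q' _ do
  rewrite count_steps_rcons lk_rcons mulrA (sqrt_lam_ratio _ _ _ e' hL hLe) -/p.
under eq_bigr => q' _ do rewrite mulrC mulrA.
rewrite /= -mulr_sumr exprD.
set bh := \sum_(q' : Q) _.
set r := Num.sqrt _.
set k := count_steps _ q s.
have -> : w ^+ k * w ^+ distinguishes e e' (p, a) * r * bh =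
          (r * w ^+ k) * (w ^+ distinguishes e e' (p, a) * bh) by ring.
apply: ler_piMr; first by rewrite mulr_ge0 ?sqrtr_ge0 ?exprn_ge0 ?w_ge0.
have hbh := bhattacharyya_le e e' p a.
case: (distinguishes e e' (p, a)) hbh => /= hbh; last by rewrite expr0 mul1r -(subr0 1).
(* (1 + c) (1 - c) <= 1 *)
rewrite expr1; apply: le_trans (ler_wpM2l w_ge0 hbh) _.
by have := sep_const_ge0; nra.
Qed.

Lemma potential_supermartingale s :
  \sum_(x : A * Q) cyl (rcons s x) * potential (rcons s x) <= cyl s * potential s.
Proof.
have [h0|hne] := eqVneq (cyl s) 0.
  by rewrite h0 mul0r big1 // => -[a q'] _; rewrite cyl_prob_rcons h0 !mul0r.
have hLe := lk_gt0 b_distr b_gt0 hne.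
set p := last_state q s.
rewrite (eq_bigr (fun x => cyl s * sigma (q, s) x.1 *
                           (d e p x.1 x.2 * potential (rcons s (x.1, x.2))))); last first.
  by move=> -[a q'] _; rewrite cyl_prob_rcons -/p -!mulrA.
rewrite -(pair_bigA _ (fun a q' => cyl s * sigma (q, s) a *
                                   (d e p a q' * potential (rcons s (a, q'))))) /=.
have [sigma_ge0 sigma_sum] := sigma_strategy (q, s).
apply: le_trans (_ : \sum_(a : A) cyl s * sigma (q, s) a * potential s <= _).
  apply: ler_sum => a _; rewrite -mulr_sumr; apply: ler_wpM2l.
    by rewrite mulr_ge0 ?cyl_prob_ge0.
  exact: potential_step_le.
by rewrite -mulr_suml -mulr_sumr sigma_sum mulr1.
Qed.

Lemma expected_potential_le n :
  \sum_(s <- histories Q A n) cyl s * potential s <= potential [::].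
Proof.
elim: n => [|n IH].
  by rewrite big_seq1 /cyl_prob /= big_ord0 eqxx mulr1 mul1r.
apply: le_trans IH; rewrite big_allpairs_dep /=.
by apply: ler_sum => s _; exact: potential_supermartingale.
Qed.

Lemma potential_nil_le eps : 0 < eps <= 1 -> eps < b e -> potential [::] <= #|E|%:R / eps.
Proof.
move=> /andP [he0 he1] hbe; have hb0 := lt_trans he0 hbe.
have -> : #|E|%:R / eps = \sum_(e' : E) eps^-1 by rewrite sumr_const mulr_natl -mulr_natr.
rewrite /potential; apply: ler_sum => e' _.
rewrite expr0 mulr1 /=; apply: sqrtr_le_ge1; first by rewrite invr_ge1 ?unitfE ?gt_eqF.
have [b_ge0 _] := b_distr.
rewrite /lk /= divr_ge0 ?b_ge0 //= ler_pdivrMr //.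
apply: le_trans (is_distr_le1 e' b_distr) _.
by rewrite mulrC ler_pdivlMr // mul1r ltW.
Qed.

Lemma potential_ge_threshold eps k s : 0 < eps <= 1 -> (0 < k)%N ->
  (#|E| * k <= count_steps (dstg delta) q s)%N -> (forall e', eps < lkq s e') ->
  eps * w ^+ k <= potential s.
Proof.
move=> /andP [he0 he1] hk hcount hlk.
have [e' he'] : exists e', (k <= count_steps (distinguishes e e') q s)%N.
  have hsum : (count_steps (dstg delta) q s <=
               \sum_(e' : E) count_steps (distinguishes e e') q s)%N.
    by apply: count_steps_le_sum; exact: dstg_distinguishes.
  have hE : (0 < #|E|)%N by apply/card_gt0P; exists e.
  by apply: pigeonhole_sum; move: hcount hsum hE hk; lia.
rewrite /potential (bigD1 e') //= -[X in X <= _]addr0; apply: lerD; last first.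
  by apply: sumr_ge0 => i _; rewrite mulr_ge0 ?sqrtr_ge0 ?exprn_ge0 ?w_ge0.
apply: ler_pM; [exact: ltW | by rewrite exprn_ge0 ?w_ge0 | |].
  apply: sqrtr_ge_le1; first by rewrite ltW.
  have hLe := lt_trans he0 (hlk e).
  rewrite ler_pdivlMr //; apply: le_trans (ltW (hlk e')).
  by apply: ler_piMr; [exact: ltW | exact: is_distr_le1 (lk_distr q s b_distr)].
by apply: ler_weXn2l => //; rewrite lerDl sep_const_ge0.
Qed.

(* Markov's inequality for the supermartingale, on histories of length n. *)
Lemma prob_bad_histories_le eps k n : 0 < eps <= 1 -> eps < b e -> (0 < k)%N ->
  \sum_(s <- histories Q A n)
     ((#|E| * k <= count_steps (dstg delta) q s)%N && [forall e', eps < lkq s e'])%:R * cyl s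
  <= #|E|%:R / eps / (eps * w ^+ k).
Proof.
move=> he hbe hk; have he0 : 0 < eps by case/andP: he.
have hT : 0 < eps * w ^+ k by rewrite mulr_gt0 // exprn_gt0 // ltr_wpDr ?sep_const_ge0.
apply: le_trans (_ : (\sum_(s <- histories Q A n) cyl s * potential s) / (eps * w ^+ k) <= _).
  rewrite mulr_suml; apply: ler_sum => s _.
  case: andP => [[hcount /forallP hlk]|_]; last first.
    by rewrite mul0r mulr_ge0 ?invr_ge0 ?(ltW hT) // mulr_ge0 ?cyl_prob_ge0 ?potential_ge0.
  rewrite mul1r ler_pdivlMr //; apply: ler_wpM2l; first exact: cyl_prob_ge0.
  exact: potential_ge_threshold.
rewrite ler_pM2r ?invr_gt0 //; apply: le_trans (expected_potential_le n) _.
exact: potential_nil_le.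
Qed.

Variables (x0 : Q * A) (mu : {measure set (RunSpace x0) -> \bar R}).
Hypothesis mu_cyl : forall pi, mu (cylinder x0 pi) = (cyl_prob delta e sigma q pi)%:E.

Lemma measure_dstg_never_small_le eps k : 0 < eps <= 1 -> eps < b e -> (0 < k)%N ->
  (mu ([set rho : RunSpace x0 | nb_dstg_ge delta rho (#|E| * k)]
       `&` NeverSmallBelief delta dflt b eps) <= (#|E|%:R / eps / (eps * w ^+ k))%:E)%E.
Proof.
move=> he hbe hk.
pose many_dstg (pi : frun Q A) := (#|E| * k <= count_steps (dstg delta) pi.1 pi.2)%N.
have many_dstgE n : [set rho : RunSpace x0 | (#|E| * k <= dstg_count delta rho n)%N] =
                    [set rho | many_dstg (Defs.prefix rho n)].
  by apply/seteqP; split => rho /=; rewrite /dstg_count count_iota_prefix.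
pose F n := [set rho : RunSpace x0 | (#|E| * k <= dstg_count delta rho n)%N]
            `&` NeverSmallBelief delta dflt b eps.
have mF n : measurable (F n).
  rewrite /F many_dstgE; apply: measurableI; first exact: measurable_prefix_set.
  exact: measurable_NeverSmallBelief.
have -> : [set rho : RunSpace x0 | nb_dstg_ge delta rho (#|E| * k)]
          `&` NeverSmallBelief delta dflt b eps = \bigcup_n F n.
  apply/seteqP; split => rho /=; first by move=> [[n hn] hns]; exists n.
  by move=> [n _ [hn hns]]; split => //; exists n.
apply: nondecreasing_bigcup_measure_le => // [n n' hnn'|n].
  by apply/subsetPset => rho [hn hns]; split => //=; apply: leq_trans hn (dstg_count_le _ _ _).
pose bad pi := many_dstg pi && [forall e', eps < lk delta dflt b pi e'].
have sub : F n `<=` [set rho | bad (Defs.prefix rho n)].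
  by rewrite /F many_dstgE => rho [hn hns] /=; apply/andP; split => //; exact/forallP.
apply: le_trans (le_measure _ _ _ sub) _; rewrite ?inE; [exact: mF | exact: measurable_prefix_set |].
apply: le_trans (measure_prefix_set_le mu_cyl _ n) _.
by rewrite lee_fin; exact: prob_bad_histories_le.
Qed.

End Potential.
End Beliefs.

(** * The polynomial bound *)

Lemma ceil_log2_inv_spec (eps : R) : 0 < eps -> eps^-1 <= 2 ^+ ceil_log2_inv eps.
Proof.
move=> he; rewrite /ceil_log2_inv; case: pselect => [h|hn]; first by case: ex_minnP.
exfalso; apply: hn.
have hb : eps^-1 < (Num.Def.archi_bound eps^-1)%:R.
  by apply: archi_boundP; rewrite invr_ge0 ltW.
exists (Num.Def.archi_bound eps^-1); apply: le_trans (ltW hb) _.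
by rewrite -natrX ler_nat ltnW // ltn_expl.
Qed.

Lemma den_le_max_bits (Q A E : finType) (delta : E -> Q -> A -> Q -> rat) e p a q' :
  denq (delta e p a q') <= (2 ^ max_bits delta)%N%:Z.
Proof.
have hbits : (rat_bits (delta e p a q') <= max_bits delta)%N.
  apply: leq_trans (leq_bigmax e); apply: leq_trans (leq_bigmax p).
  by apply: leq_trans (leq_bigmax a); exact: (leq_bigmax q').
have hlen : (bitlen `|denq (delta e p a q')|%N <= max_bits delta)%N.
  by apply: leq_trans hbits; rewrite /rat_bits leq_addl.
have ltn_bitlen n : (n < 2 ^ bitlen n)%N.
  by rewrite /bitlen; case: eqP => [->//|_]; exact: trunc_log_ltn.
rewrite -(gez0_abs (ltW (denq_gt0 (delta e p a q')))) lez_nat.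
by apply: ltnW; apply: leq_trans (ltn_bitlen _) _; rewrite leq_exp2l.
Qed.

Lemma sep_const_pow_ge2 (N : nat) : (0 < N)%N -> 2 <= (1 + sep_const N) ^+ (8 * N ^ 4).
Proof.
move=> hN; apply: le_trans (bernoulli_ineq _ (sep_const_ge0 N)).
have hN0 : N%:R != 0 :> R by rewrite pnatr_eq0 -lt0n.
have -> : (8 * N ^ 4)%:R * sep_const N = 1 by rewrite /sep_const natrM natrX; field.
by rewrite (_ : 2 = 1 + 1 :> R).
Qed.

Lemma markov_bound_le (k N x : nat) (eps : R) : 0 < eps -> eps^-1 <= 2 ^+ x -> (0 < N)%N ->
  k%:R / eps / (eps * (1 + sep_const N) ^+ (8 * N ^ 4 * (3 * x + k))) <= eps.
Proof.
move=> he hx hN.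
set W := _ ^+ _.
have hW : 2 ^+ (3 * x + k) <= W.
  rewrite /W exprM; apply: lerXn2r; rewrite ?nnegrE //; last exact: sep_const_pow_ge2.
  by apply: le_trans (sep_const_pow_ge2 hN).
set z := eps^-1 in hx.
have hz : eps * z = 1 by rewrite mulfV // gt_eqF.
have hz0 : 0 < z by rewrite invr_gt0.
have hz3 : z ^+ 3 <= (2 ^+ x) ^+ 3.
  by apply: lerXn2r; rewrite ?nnegrE ?exprn_ge0 // ltW.
have hk : k%:R <= 2 ^+ k :> R by rewrite -natrX ler_nat ltnW // ltn_expl.
have hW2 : z ^+ 3 * k%:R <= W.
  apply: le_trans hW; rewrite exprD mulnC exprM.
  by apply: ler_pM; rewrite ?exprn_ge0 ?ler0n // ltW.
have hW0 : 0 < W by apply: lt_le_trans hW; rewrite exprn_gt0.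
rewrite ler_pdivrMr ?mulr_gt0 // -[k%:R / eps]/(k%:R * z).
have -> : k%:R * z = eps * z * (eps * z) * (k%:R * z) by rewrite hz !mul1r.
have -> : eps * z * (eps * z) * (k%:R * z) = eps * (eps * (z ^+ 3 * k%:R)) by ring.
by apply: ler_wpM2l; [exact: ltW | apply: ler_wpM2l; [exact: ltW | exact: hW2]].
Qed.

Theorem mainTheorem3 :
  exists P : poly3,
  forall (Q A E : finType) (delta : E -> Q -> A -> Q -> rat),
  is_memdp delta ->
  exists m : R -> nat,
    (forall eps : R, 0 < eps < 1 ->
       (m eps <= eval_poly3 P #|E| (2 ^ max_bits delta)%N (ceil_log2_inv eps))%N) /\
    (forall eps : R, 0 < eps < 1 ->
     forall (dflt : (E -> R) -> Q -> A -> Q -> (E -> R)),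
       (forall b q a q', is_distr (dflt b q a q')) ->
     forall (b : E -> R), is_distr b ->
     forall (q : Q) (sigma : strategy Q A), is_strategy sigma ->
     forall (e : E) (x0 : Q * A) (mu : {measure set (RunSpace x0) -> \bar R}),
       is_run_measure delta x0 e sigma q mu ->
       (mu ([set rho : RunSpace x0 | nb_dstg_ge delta rho (m eps)]
            `&` NeverSmallBelief delta dflt b eps) <= eps%:E)%E).
Proof.
(* m = |E| * 8 N^4 (3 x + |E|) = 24 |E| N^4 x + 8 |E|^2 N^4 *)
pose P : poly3 := [:: (24%N, (1%N, 4%N, 1%N)); (8%N, (2%N, 4%N, 0%N))].
exists P => Q A E delta [_ [_ [hE hdelta]]].
set N := (2 ^ max_bits delta)%N.
exists (fun eps => eval_poly3 P #|E| N (ceil_log2_inv eps)).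
split=> [//|eps /andP [he0 he1] dflt dflt_distr b hb q sigma hsigma e x0 mu [_ mu_cyl]].
set x := ceil_log2_inv eps.
have -> : eval_poly3 P #|E| N x = (#|E| * (8 * N ^ 4 * (3 * x + #|E|)))%N.
  by rewrite /eval_poly3 !big_cons big_nil /=; ring.
have [hbe|hbe] := leP (b e) eps.
  have -> : forall S, S `&` NeverSmallBelief delta dflt b eps = set0.
    by move=> S; apply/seteqP; split=> rho // [_ /(_ 0%N e)]; rewrite ltNge hbe.
  by rewrite measure0 lee_fin ltW.
have hN : (0 < N)%N by rewrite expn_gt0.
have hb0 : 0 < b e by exact: lt_trans hbe.
apply: le_trans (measure_dstg_never_small_le (fun e q a => (hdelta e q a).1)
  (fun e q a => (hdelta e q a).2) dflt_distr (@den_le_max_bits _ _ _ delta)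
  hsigma hb hb0 mu_cyl _ hbe _) _.
- by rewrite he0 ltW.
- by rewrite !muln_gt0 expn_gt0 addn_gt0 hE orbT.
by rewrite lee_fin markov_bound_le // ceil_log2_inv_spec.
Qed.
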